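(* Let $d\ge 3$ be odd. Then $G_d$ is weakly regular branch over its commutator subgroup $G_d'$: $G_d$ is spherically transitive and $G_d'\times\cdots\times G_d'$ ($d$ factors) is contained in $\psi_1(G_d'\cap \mathrm{St}_{G_d}(\widehat 1))$.
   Context: Let $d\ge 3$, $X=\{1,\dots,d\}$, $T$ the $d$-regular rooted tree with vertex set $X^*$. $\mathrm{Aut}(T)$ is the group of root-preserving automorphisms with product left-to-right: $(gh)(u)=h(g(u))$. Sections $g|_u$ are defined by $g(uv)=g(u)\,g|_u(v)$; we write $g=(g|_1,\dots,g|_d)\lambda_g$ with $\lambda_g\in S_d$ the action on the first level; $e$ is the identity; $\overline{j}\in\{1,\dots,d\}$ denotes $j$ mod $d$. $G_d=\langle a_1,\dots,a_d\rangle\le\mathrm{Aut}(T)$ where $a_i$ acts on the first level as $(i\ \overline{i+1})$, with $a_i|_i=a_i$, $a_i|_{\overline{i+1}}=a_{\overline{i+1}}$, and $a_i|_x=e$ otherwise. $\mathrm{St}_{G}(\widehat 1)$ is the subgroup of elements fixing every vertex of the first level $X$, and $\psi_1:\mathrm{St}_G(\widehat1)\to G^d$, $g\mapsto (g|_1,\dots,g|_d)$ is the (injective) homomorphism. A group is spherically transitive if it acts transitively on each level $X^k$. *)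

(* Vertices of the d-regular rooted tree T are words over
   X = 'I_d (the letter k : 'I_d stands for the paper's letter k+1).
   Tree automorphisms are represented as functions seq 'I_d -> seq 'I_d;
   group elements are equal when they are extensionally equal. *)
From mathcomp Require Import all_boot.
Set Implicit Arguments. Unset Strict Implicit. Unset Printing Implicit Defensive.

Definition vertex (d : nat) := seq 'I_d.

(* Action of the generator a_i (inv = false) or of its inverse a_i^-1
   (inv = true) on a vertex.  a_i swaps i and i+1 (mod d) on the first level,
   with sections a_i|_i = a_i, a_i|_(i+1) = a_(i+1), e elsewhere:
     a_i (i w)     = (i+1) a_i(w),
     a_i ((i+1) w) = i a_(i+1)(w),
     a_i (x w)     = x w            otherwise.                            *)
Fixpoint gen_act (d : nat) (inv : bool) (i : 'I_d) (w : vertex d) : vertex d :=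
  match w with
  | [::] => [::]
  | x :: w' =>
      if ~~ inv then
        if x == i then ordS i :: gen_act inv i w'
        else if x == ordS i then i :: gen_act inv (ordS i) w'
        else x :: w'
      else
        if x == ordS i then i :: gen_act inv i w'
        else if x == i then ordS i :: gen_act inv (ordS i) w'
        else x :: w'
  end.

(* Words in the generators a_i^{+-1}: a letter (b, i) is a_i^-1 if b, else a_i. *)
Definition gword (d : nat) := seq (bool * 'I_d).

(* Evaluation of a word as a tree automorphism, with the paper's left-to-right
   product convention (gh)(u) = h(g(u)). *)
Definition eval_word (d : nat) (ws : gword d) (u : vertex d) : vertex d :=
  foldl (fun v l => gen_act l.1 l.2 v) u ws.

Definition winv (d : nat) (ws : gword d) : gword d :=
  rev (map (fun l => (~~ l.1, l.2)) ws).

Definition wcomm (d : nat) (a b : gword d) : gword d :=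
  winv a ++ winv b ++ a ++ b.

Definition commprod (d : nat) (cs : seq (gword d * gword d)) : gword d :=
  flatten (map (fun p => wcomm p.1 p.2) cs).

Definition in_G (d : nat) (f : vertex d -> vertex d) : Prop :=
  exists w : gword d, forall u, f u = eval_word w u.

(* f is an element of the commutator subgroup G_d' (the subgroup generated by
   all commutators [g,h], g,h in G_d; since the inverse of a commutator is a
   commutator, its elements are exactly finite products of commutators). *)
Definition in_G' (d : nat) (f : vertex d -> vertex d) : Prop :=
  exists cs : seq (gword d * gword d), forall u, f u = eval_word (commprod cs) u.

Definition in_St1 (d : nat) (f : vertex d -> vertex d) : Prop :=
  forall x : 'I_d, f [:: x] = [:: x].

(* Section f|_u, defined by f(uv) = f(u) f|_u(v). *)
Definition section (d : nat) (f : vertex d -> vertex d) (u : vertex d) :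
  vertex d -> vertex d :=
  fun v => drop (size u) (f (u ++ v)).

Definition spherically_transitive_G (d : nat) : Prop :=
  forall (k : nat) (u v : vertex d), size u = k -> size v = k ->
    exists f, in_G f /\ f u = v.

Definition G'_branching (d : nat) : Prop :=
  forall hs : 'I_d -> (vertex d -> vertex d),
    (forall x, in_G' (hs x)) ->
    exists g, in_G' g /\ in_St1 g /\
      forall (x : 'I_d) (v : vertex d), section g [:: x] v = hs x v.

From mathcomp Require Import all_boot zify.
Set Implicit Arguments. Unset Strict Implicit. Unset Printing Implicit Defensive.

(* For odd d the word a_x a_(x+1)^-1 a_(x+2) ... a_(x+d-1) fixes the vertex x
   with section a_x; conjugating by a_x shifts x, so every generator, hence every
   element of G_d, is the section at x of an element fixing x.  Together with the
   transitivity of the a_i on the first level this gives spherical transitivity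
   by induction on the level.

   For the branching property, call h rigid at x if some element of G_d' acts as
   h below x and trivially on the other subtrees of the first level.  Rigid
   sections are closed under products, inverses and conjugation by G_d (using the
   lifts above), do not depend on x (conjugate by a_x), and contain the explicit
   commutator [a_(x+1), a_x].  The usual commutator identities then make every
   commutator, hence all of G_d', rigid at every x, and a product over x of such
   elements realises any tuple in G_d' x ... x G_d'. *)

Definition shift d k (x : 'I_d) := iter k (@ordS d) x.

Lemma shift_val d k (x : 'I_d) : val (shift k x) = (x + k) %% d.
Proof.
elim: k => [|k IH] /=; first by rewrite addn0 modn_small.
by rewrite IH -addn1 modnDml addn1 addnS.
Qed.

Lemma shiftS d k (x : 'I_d) : shift k.+1 x = shift k (ordS x).
Proof. by rewrite /shift iterSr. Qed.

Lemma shift_neq d k (x : 'I_d) : 0 < k < d -> shift k x != x.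
Proof.
move=> /andP [k_gt0 k_lt]; apply/eqP => /(congr1 (@nat_of_ord d)); rewrite shift_val.
have := ltn_ord x; case: (ltnP (x + k) d) => [lt_xk|le_xk] lt_x.
  by rewrite modn_small //; lia.
have -> : x + k = (x + k - d) + d by lia.
by rewrite modnDr modn_small; lia.
Qed.

Lemma shift_period d (x : 'I_d) : shift d x = x.
Proof. by apply: val_inj; rewrite shift_val modnDr modn_small. Qed.

Lemma shift_onto d (x y : 'I_d) : exists k, shift k x = y.
Proof.
exists (d - x + y); apply: val_inj; rewrite shift_val.
have := ltn_ord x; have := ltn_ord y => lt_y lt_x.
have -> : x + (d - x + y) = y + d by lia.
by rewrite modnDr modn_small.
Qed.

Section Words.
Variable d : nat.
Implicit Types (u w : vertex d) (A B V W : gword d) (b : bool) (i y : 'I_d).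

Lemma eval_word_cat A B u : eval_word (A ++ B) u = eval_word B (eval_word A u).
Proof. by rewrite /eval_word foldl_cat. Qed.

Lemma eval_word_cons b i W u : eval_word ((b, i) :: W) u = eval_word W (gen_act b i u).
Proof. by []. Qed.

Lemma eval_word1 b i u : eval_word [:: (b, i)] u = gen_act b i u.
Proof. by []. Qed.

Lemma eval_wcomm_letters b i c j u :
  eval_word (wcomm [:: (b, i)] [:: (c, j)]) u =
  gen_act c j (gen_act b i (gen_act (~~ c) j (gen_act (~~ b) i u))).
Proof. by []. Qed.

Lemma gen_actKb b i : cancel (gen_act b i) (gen_act (~~ b) i).
Proof.
move=> u; case: b; elim: u i => [|x w IH] i //=.
- case: (eqVneq x (ordS i)) => [->|xNSi] /=; first by rewrite eqxx IH.
  case: (eqVneq x i) => [exi|xNi] /=; last by rewrite (negbTE xNSi) (negbTE xNi).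
  by subst x; rewrite eq_sym (negbTE xNSi) eqxx IH.
- case: (eqVneq x i) => [->|xNi] /=; first by rewrite eqxx IH.
  case: (eqVneq x (ordS i)) => [exi|xNSi] /=; last by rewrite (negbTE xNi) (negbTE xNSi).
  by subst x; rewrite eq_sym (negbTE xNi) eqxx IH.
Qed.

Lemma gen_actK i : cancel (gen_act false i) (gen_act true i).
Proof. exact: (gen_actKb false). Qed.

Lemma gen_actVK i : cancel (gen_act true i) (gen_act false i).
Proof. exact: (gen_actKb true). Qed.

Lemma winv_cons (l : bool * 'I_d) W : winv (l :: W) = winv W ++ [:: (~~ l.1, l.2)].
Proof. by rewrite /winv /= rev_cons cats1. Qed.

Lemma winv_cat A B : winv (A ++ B) = winv B ++ winv A.
Proof. by rewrite /winv map_cat rev_cat. Qed.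

Lemma winvK : involutive (@winv d).
Proof.
move=> W; rewrite /winv map_rev revK -map_comp map_id_in // => -[b i] _ /=.
by rewrite negbK.
Qed.

Lemma eval_wordK W : cancel (eval_word W) (eval_word (winv W)).
Proof.
elim: W => [|l W IH] u //=.
by rewrite winv_cons eval_word_cat IH /= gen_actKb.
Qed.

Lemma eval_wordVK W : cancel (eval_word (winv W)) (eval_word W).
Proof. by move=> u; rewrite -{1}(winvK W) eval_wordK. Qed.

Lemma size_gen_act b i u : size (gen_act b i u) = size u.
Proof. by case: b; elim: u i => [|x w IH] i //=; repeat case: ifP => _ /=; rewrite ?IH. Qed.

Lemma size_eval_word W u : size (eval_word W u) = size u.
Proof. by elim: W u => [|l W IH] u //=; rewrite IH size_gen_act. Qed.

Lemma eval_word_root W : eval_word W [::] = [::].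
Proof. by apply: size0nil; rewrite size_eval_word. Qed.

Lemma eval_word_consP W y u : exists y' u', eval_word W (y :: u) = y' :: u'.
Proof.
by have := size_eval_word W (y :: u); case: (eval_word W _) => // y' u' _; exists y', u'.
Qed.

Lemma eval_winv_fix W x (f g : vertex d -> vertex d) :
  (forall u, eval_word W (x :: u) = x :: f u) -> cancel g f ->
  forall u, eval_word (winv W) (x :: u) = x :: g u.
Proof. by move=> Wx gK u; rewrite -{1}(gK u) -Wx eval_wordK. Qed.

Lemma eval_winv_other W x z (f g : vertex d -> vertex d) y u :
  (forall v, eval_word W (x :: v) = x :: f v) ->
  (forall v, eval_word W (z :: v) = z :: g v) ->
  y != x -> y != z ->
  exists y' u', [/\ eval_word (winv W) (y :: u) = y' :: u', y' != x & y' != z].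
Proof.
move=> Wx Wz yNx yNz; have [y' [u' WVyu]] := eval_word_consP (winv W) y u.
exists y', u'; have := eval_wordVK W (y :: u); rewrite WVyu => Wy'u'.
split=> //; apply/eqP=> y'E; move: Wy'u'; rewrite y'E.
  by rewrite Wx => -[yE]; rewrite yE eqxx in yNx.
by rewrite Wz => -[yE]; rewrite yE eqxx in yNz.
Qed.

Lemma commprod_cat (cs1 cs2 : seq (gword d * gword d)) :
  commprod (cs1 ++ cs2) = commprod cs1 ++ commprod cs2.
Proof. by rewrite /commprod map_cat flatten_cat. Qed.

Lemma commprod_cons (p : gword d * gword d) cs :
  commprod (p :: cs) = wcomm p.1 p.2 ++ commprod cs.
Proof. by []. Qed.

Lemma commprod1 (p : gword d * gword d) : commprod [:: p] = wcomm p.1 p.2.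
Proof. exact: cats0. Qed.

Lemma gen_act_other b i y w : y != i -> y != ordS i -> gen_act b i (y :: w) = y :: w.
Proof. by case: b => /= /negbTE-> /negbTE->. Qed.

Lemma gen_actF_self i w : gen_act false i (i :: w) = ordS i :: gen_act false i w.
Proof. by rewrite /= eqxx. Qed.

Lemma gen_actT_succ i w : gen_act true i (ordS i :: w) = i :: gen_act true i w.
Proof. by rewrite /= eqxx. Qed.

Hypothesis d_gt1 : 1 < d.

Lemma ordS_neq i : ordS i != i.
Proof. exact: (@shift_neq _ 1). Qed.

Lemma gen_act_self b i w :
  gen_act b i (i :: w) = ordS i :: gen_act b (if b then ordS i else i) w.
Proof. by have := ordS_neq i; rewrite eq_sym => /negbTE iNSi; case: b; rewrite /= ?iNSi eqxx. Qed.

Lemma gen_act_succ b i w :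
  gen_act b i (ordS i :: w) = i :: gen_act b (if b then i else ordS i) w.
Proof. by case: b; rewrite /= ?(negbTE (ordS_neq i)) eqxx. Qed.

Lemma gen_actT_self i w : gen_act true i (i :: w) = ordS i :: gen_act true (ordS i) w.
Proof. exact: (gen_act_self true). Qed.

Lemma gen_actF_succ i w : gen_act false i (ordS i :: w) = i :: gen_act false (ordS i) w.
Proof. exact: (gen_act_succ false). Qed.

Lemma gen_act_comm b c i j u :
  i != j -> j != ordS i -> i != ordS j ->
  gen_act b i (gen_act c j u) = gen_act c j (gen_act b i u).
Proof.
move=> iNj jNSi iNSj.
have SiNSj : ordS i != ordS j by apply: contra iNj => /eqP/ordS_inj->.
have SiNj : ordS i != j by rewrite eq_sym.
have SjNi : ordS j != i by rewrite eq_sym.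
have SjNSi : ordS j != ordS i by rewrite eq_sym.
have jNi : j != i by rewrite eq_sym.
case: u => [|y w] //.
case: (eqVneq y i) => [->|yNi].
  by rewrite (gen_act_other _ _ iNj iNSj) gen_act_self gen_act_other.
case: (eqVneq y (ordS i)) => [->|yNSi].
  by rewrite (gen_act_other _ _ SiNj SiNSj) gen_act_succ gen_act_other.
case: (eqVneq y j) => [->|yNj].
  rewrite gen_act_self (gen_act_other _ _ SjNi SjNSi).
  by rewrite (gen_act_other _ _ jNi jNSi) gen_act_self.
case: (eqVneq y (ordS j)) => [->|yNSj].
  rewrite gen_act_succ (gen_act_other _ _ jNi jNSi).
  by rewrite (gen_act_other _ _ SjNi SjNSi) gen_act_succ.
by rewrite !gen_act_other.
Qed.

End Words.

Lemma move_first_letter d k (x : 'I_d) u :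
  exists (W : gword d) u', eval_word W (x :: u) = shift k x :: u'.
Proof.
elim: k => [|k [W [u' Wxu]]]; first by exists [::], u.
exists (W ++ [:: (false, shift k x)]), (gen_act false (shift k x) u').
by rewrite eval_word_cat Wxu eval_word1 gen_actF_self.
Qed.

Section RigidCommutators.
Variable d : nat.
Implicit Types (u : vertex d) (A B V : gword d) (x y : 'I_d) (cs : seq (gword d * gword d)).

Definition G'_rist x (h : vertex d -> vertex d) :=
  exists cs,
    (forall u, eval_word (commprod cs) (x :: u) = x :: h u) /\
    (forall y u, y != x -> eval_word (commprod cs) (y :: u) = y :: u).

Lemma G'_rist_ext x h h' : G'_rist x h -> h =1 h' -> G'_rist x h'.
Proof. by move=> [cs [csx csy]] eh; exists cs; split => // u; rewrite csx eh. Qed.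

Lemma G'_rist_trivial x h : h =1 id -> G'_rist x h.
Proof. by move=> eh; exists [::]; split=> [u|y u _] //=; rewrite eh. Qed.

Lemma G'_rist_comp x h1 h2 : G'_rist x h1 -> G'_rist x h2 -> G'_rist x (h2 \o h1).
Proof.
move=> [cs1 [cs1x cs1y]] [cs2 [cs2x cs2y]]; exists (cs1 ++ cs2).
by split => [u|y u yNx]; rewrite commprod_cat eval_word_cat ?cs1x ?cs2x // cs1y // cs2y.
Qed.

Definition comm_rev cs := rev (map (fun p => (p.2, p.1)) cs).

Lemma wcommK A B : cancel (eval_word (wcomm A B)) (eval_word (wcomm B A)).
Proof. by move=> u; rewrite /wcomm !eval_word_cat !eval_wordK !eval_wordVK. Qed.

Lemma commprod_revK cs : cancel (eval_word (commprod cs)) (eval_word (commprod (comm_rev cs))).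
Proof.
elim: cs => [|p cs IH] u //.
rewrite /comm_rev map_cons rev_cons -cats1 -/(comm_rev cs) !commprod_cat.
by rewrite commprod1 commprod_cons !eval_word_cat IH /= !eval_wordK !eval_wordVK.
Qed.

Lemma G'_rist_inv x h g : G'_rist x h -> cancel g h -> G'_rist x g.
Proof.
move=> [cs [csx csy]] gK; exists (comm_rev cs); split => [u|y u yNx].
  by rewrite -{1}(gK u) -csx commprod_revK.
by rewrite -{1}(csy y u yNx) commprod_revK.
Qed.

Lemma G'_rist_wcomm_sym x A B :
  G'_rist x (eval_word (wcomm A B)) -> G'_rist x (eval_word (wcomm B A)).
Proof. by move=> /G'_rist_inv; apply; apply: wcommK. Qed.

Definition comm_conj V cs := map (fun p => (winv V ++ p.1 ++ V, winv V ++ p.2 ++ V)) cs.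

Lemma eval_commprod_conj V cs u :
  eval_word (commprod (comm_conj V cs)) u =
  eval_word V (eval_word (commprod cs) (eval_word (winv V) u)).
Proof.
elim: cs u => [|p cs IH] u /=; first by rewrite eval_wordVK.
rewrite commprod_cons !eval_word_cat IH.
by rewrite /wcomm !winv_cat !winvK !eval_word_cat !eval_wordK.
Qed.

End RigidCommutators.

Section OddDegree.
Variable d : nat.
Hypotheses (d_gt2 : 2 < d) (d_odd : odd d).
Implicit Types (u w : vertex d) (A B V W : gword d) (i j x y : 'I_d).

Let d_gt1 : 1 < d. Proof. lia. Qed.

Let d_half : d = (2 * d./2).+1.
Proof. by rewrite -[LHS]odd_double_half d_odd add1n mul2n. Qed.

Fixpoint alt_pairs n y : gword d :=
  if n is n'.+1 then (true, y) :: (false, ordS y) :: alt_pairs n' (ordS (ordS y))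
  else [::].

(* The word a_x a_(x+1)^-1 a_(x+2) ... a_(x+d-1): since d is odd it fixes x, and
   along the way the sections of each pair a_y^-1 a_(y+1) cancel, leaving a_x. *)
Definition cycle_word x : gword d := (false, x) :: alt_pairs d./2 (ordS x).

Lemma eval_alt_pairs_start n y u :
  eval_word (alt_pairs n y) (y :: u) = shift (2 * n) y :: u.
Proof.
elim: n y u => [|n IH] y u //.
rewrite [alt_pairs _ _]/= !eval_word_cons gen_actT_self // gen_actF_self gen_actVK IH -!shiftS.
by congr (shift _ _ :: _); lia.
Qed.

Lemma eval_alt_pairs_off n y z u :
  (forall k, k <= 2 * n -> shift k y != z) ->
  eval_word (alt_pairs n y) (z :: u) = z :: u.
Proof.
elim: n y u => [|n IH] y u yNz //.
rewrite [alt_pairs _ _]/= !eval_word_cons.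
have zNy : z != shift 0 y by rewrite eq_sym yNz.
have zNSy : z != shift 1 y by rewrite eq_sym yNz //; lia.
have zNSSy : z != shift 2 y by rewrite eq_sym yNz //; lia.
rewrite gen_act_other // gen_act_other // IH // => k le_k.
by rewrite -!shiftS yNz //; lia.
Qed.

Lemma cycle_word_fix x u : eval_word (cycle_word x) (x :: u) = x :: gen_act false x u.
Proof.
by rewrite eval_word_cons gen_actF_self eval_alt_pairs_start -shiftS -d_half shift_period.
Qed.

Lemma cycle_word_succ2 x u :
  eval_word (cycle_word x) (ordS (ordS x) :: u) = ordS x :: gen_act true (ordS x) u.
Proof.
have SSxNx : ordS (ordS x) != x by apply: (@shift_neq _ 2); lia.
have SSxNSx : ordS (ordS x) != ordS x by apply: (@shift_neq _ 1); lia.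
have SxNSSx : ordS x != ordS (ordS x) by rewrite eq_sym.
have SxNSSSx : ordS x != ordS (ordS (ordS x)).
  by rewrite eq_sym; apply: (@shift_neq _ 2); lia.
rewrite eval_word_cons gen_act_other // (_ : d./2 = (d./2).-1.+1); last by lia.
rewrite [alt_pairs _ _]/= !eval_word_cons gen_actT_succ gen_act_other //.
by rewrite eval_alt_pairs_off // => k le_k; rewrite -2!shiftS shift_neq //; lia.
Qed.

(* Induction on j - x: with c = cycle_word x, the word c^-1 a_x W a_x^-1 c works,
   the section a_x of c cancelling the one picked up by a_x. *)
Lemma lift_gen x j : exists W, forall u, eval_word W (x :: u) = x :: gen_act false j u.
Proof.
have [k <-] := shift_onto x j; elim: k x => [|k IH] x.
  by exists (cycle_word x) => u; rewrite cycle_word_fix.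
have [W Wx] := IH (ordS x).
exists (winv (cycle_word x) ++ [:: (false, x)] ++ W ++ [:: (true, x)] ++ cycle_word x) => u.
have cycVx := eval_winv_fix (@cycle_word_fix x) (gen_actVK x).
rewrite !eval_word_cat cycVx !eval_word1 gen_actF_self gen_actVK Wx gen_actT_succ.
by rewrite cycle_word_fix gen_actVK shiftS.
Qed.

Lemma lift_word x V : exists W, forall u, eval_word W (x :: u) = x :: eval_word V u.
Proof.
elim: V => [|[b j] V [W' W'x]]; first by exists [::].
have [W Wx] := lift_gen x j.
case: b; last by exists (W ++ W') => u; rewrite eval_word_cat Wx W'x.
by exists (winv W ++ W') => u; rewrite eval_word_cat (eval_winv_fix Wx (gen_actVK j)) W'x.
Qed.

Lemma transitive_level k u v : size u = k -> size v = k -> exists W, eval_word W u = v.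
Proof.
elim: k u v => [|k IH] [|x u] [|y v] //= => [_ _|[su] [sv]]; first by exists [::].
have [n <-] := shift_onto x y.
have [W1 [u' W1xu]] := move_first_letter n x u.
have su' : size u' = k by have := size_eval_word W1 (x :: u); rewrite W1xu /= su => -[].
have [W2 W2u'] := IH u' v su' sv.
have [W3 W3x] := lift_word (shift n x) W2.
by exists (W1 ++ W3); rewrite eval_word_cat W1xu W3x W2u'.
Qed.

Lemma G'_rist_conj x h V :
  G'_rist x h -> G'_rist x (eval_word V \o h \o eval_word (winv V)).
Proof.
move=> [cs [csx csy]]; have [W Wx] := lift_word x V.
have WVx := eval_winv_fix Wx (eval_wordVK V).
exists (comm_conj W cs); split => [u|y u yNx]; rewrite eval_commprod_conj /=.
  by rewrite WVx csx Wx.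
have [y' [u' Wyu]] := eval_word_consP (winv W) y u.
have y'Nx : y' != x.
  apply: contra yNx => /eqP y'x; move: (eval_wordVK W (y :: u)).
  by rewrite Wyu y'x Wx => -[->].
by rewrite Wyu csy // -Wyu eval_wordVK.
Qed.

(* Conjugating by a_x moves the support from x+1 to x; the section picked up
   on the way is undone by a further conjugation by a lift of a_(x+1). *)
Lemma G'_rist_pred x h : G'_rist (ordS x) h -> G'_rist x h.
Proof.
move=> [cs [csx csy]].
have SxNx := ordS_neq d_gt1 x.
have rist_conj : G'_rist x (gen_act false (ordS x) \o h \o gen_act true (ordS x)).
  exists (comm_conj [:: (false, x)] cs); split => [u|y u yNx];
    rewrite eval_commprod_conj [winv _]/= !eval_word1.
    by rewrite gen_actT_self // csx gen_actF_succ.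
  case: (eqVneq y (ordS x)) => [->|yNSx].
    by rewrite gen_actT_succ csy 1?eq_sym // gen_actF_self gen_actVK.
  by rewrite gen_act_other // csy // gen_act_other.
apply: G'_rist_ext (G'_rist_conj [:: (true, ordS x)] rist_conj) _ => u.
by rewrite /= gen_actK gen_actK.
Qed.

Lemma G'_rist_move x y h : G'_rist y h -> G'_rist x h.
Proof.
have [k <-] := shift_onto x y; elim: k x => [|k IH] x //.
by rewrite shiftS => /IH; apply: G'_rist_pred.
Qed.

(* The witness is [t, s] with t = a_x^2 and s = a_(x+1) (cycle_word x): t is
   trivial off the subtrees at x and x+1, s fixes x and x+1, and their sections
   there are (a_x a_(x+1), a_(x+1) a_x) and (a_x, e), so [t, s] is trivial at x+1
   and acts as [a_x a_(x+1), a_x] = [a_(x+1), a_x] at x. *)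
Lemma G'_rist_comm_succ x : G'_rist x (eval_word (wcomm [:: (false, ordS x)] [:: (false, x)])).
Proof.
set Sx := ordS x.
have SxNx : Sx != x := ordS_neq d_gt1 x.
have xNSx : x != Sx by rewrite eq_sym.
have xNSSx : x != ordS Sx by rewrite eq_sym; apply: (@shift_neq _ 2); lia.
set t : gword d := [:: (false, x); (false, x)].
set s : gword d := (false, Sx) :: cycle_word x.
have t_x u : eval_word t (x :: u) = x :: gen_act false Sx (gen_act false x u).
  by rewrite !eval_word_cons gen_actF_self gen_actF_succ.
have t_Sx u : eval_word t (Sx :: u) = Sx :: gen_act false x (gen_act false Sx u).
  by rewrite !eval_word_cons gen_actF_succ // gen_actF_self.
have t_other y u : y != x -> y != Sx -> eval_word t (y :: u) = y :: u.
  by move=> yNx yNSx; rewrite !eval_word_cons !gen_act_other.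
have s_x u : eval_word s (x :: u) = x :: gen_act false x u.
  by rewrite eval_word_cons gen_act_other // cycle_word_fix.
have s_Sx u : eval_word s (Sx :: u) = Sx :: u.
  by rewrite eval_word_cons gen_actF_self cycle_word_succ2 gen_actK.
have tV_x u : eval_word (winv t) (x :: u) = x :: gen_act true x (gen_act true Sx u).
  apply: (eval_winv_fix (g := gen_act true x \o gen_act true Sx) t_x) => v /=.
  by rewrite !gen_actVK.
have tV_Sx u : eval_word (winv t) (Sx :: u) = Sx :: gen_act true Sx (gen_act true x u).
  apply: (eval_winv_fix (g := gen_act true Sx \o gen_act true x) t_Sx) => v /=.
  by rewrite !gen_actVK.
have tV_other y u : y != x -> y != Sx -> eval_word (winv t) (y :: u) = y :: u.
  by move=> yNx yNSx; apply: (eval_winv_fix (f := id) (g := id)) => // v; apply: t_other.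
have sV_x u : eval_word (winv s) (x :: u) = x :: gen_act true x u.
  exact: (eval_winv_fix s_x (gen_actVK x)).
have sV_Sx u : eval_word (winv s) (Sx :: u) = Sx :: u.
  exact: (eval_winv_fix (f := id) (g := id) s_Sx).
exists [:: (t, s)]; rewrite commprod1.
split => [u|y u yNx]; rewrite /wcomm !eval_word_cat.
  by rewrite tV_x sV_x t_x s_x gen_actVK.
case: (eqVneq y Sx) => [->|yNSx]; first by rewrite tV_Sx sV_Sx t_Sx s_Sx !gen_actVK.
have [y' [u' [sVyu y'Nx y'NSx]]] := eval_winv_other (g := id) u s_x s_Sx yNx yNSx.
by rewrite tV_other // sVyu t_other // -sVyu eval_wordVK.
Qed.

Lemma G'_rist_wcomm_gens x i j :
  G'_rist x (eval_word (wcomm [:: (false, i)] [:: (false, j)])).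
Proof.
case: (eqVneq i j) => [<-|iNj].
  by apply: G'_rist_trivial => u; rewrite eval_wcomm_letters !gen_actVK.
case: (eqVneq i (ordS j)) => [->|iNSj]; first exact: G'_rist_move (G'_rist_comm_succ j).
case: (eqVneq j (ordS i)) => [->|jNSi].
  exact/G'_rist_wcomm_sym/(G'_rist_move x (G'_rist_comm_succ i)).
apply: G'_rist_trivial => u.
by rewrite eval_wcomm_letters (gen_act_comm d_gt1 false true _ iNj jNSi iNSj) !gen_actVK.
Qed.

(* [A^-1, B] = A [B, A] A^-1 and [A, B^-1] = B [B, A] B^-1. *)
Lemma G'_rist_wcomm_invl x A B :
  G'_rist x (eval_word (wcomm A B)) -> G'_rist x (eval_word (wcomm (winv A) B)).
Proof.
move=> /G'_rist_wcomm_sym /(G'_rist_conj (winv A)) /G'_rist_ext; apply=> u.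
by rewrite /wcomm winvK /= !eval_word_cat eval_wordK.
Qed.

Lemma G'_rist_wcomm_invr x A B :
  G'_rist x (eval_word (wcomm A B)) -> G'_rist x (eval_word (wcomm A (winv B))).
Proof.
move=> /G'_rist_wcomm_sym /(G'_rist_conj (winv B)) /G'_rist_ext; apply=> u.
by rewrite /wcomm winvK /= !eval_word_cat eval_wordK.
Qed.

Lemma G'_rist_wcomm_letters x b i c j :
  G'_rist x (eval_word (wcomm [:: (b, i)] [:: (c, j)])).
Proof.
have winv_letter k : [:: (true, k)] = winv [:: (false, k)] by [].
have rist_bF : G'_rist x (eval_word (wcomm [:: (b, i)] [:: (false, j)])).
  case: b; last exact: G'_rist_wcomm_gens.
  by rewrite winv_letter; apply/G'_rist_wcomm_invl/G'_rist_wcomm_gens.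
by case: c => //; rewrite winv_letter; apply: G'_rist_wcomm_invr.
Qed.

(* [A1 A2, B] = A2^-1 [A1, B] A2 [A2, B]. *)
Lemma G'_rist_wcomm_catl x A1 A2 B :
  G'_rist x (eval_word (wcomm A1 B)) -> G'_rist x (eval_word (wcomm A2 B)) ->
  G'_rist x (eval_word (wcomm (A1 ++ A2) B)).
Proof.
move=> rist1 rist2; apply: G'_rist_ext (G'_rist_comp (G'_rist_conj A2 rist1) rist2) _ => u.
by rewrite /wcomm winv_cat /= !eval_word_cat !eval_wordK.
Qed.

Lemma G'_rist_wcomm_wordl x B :
  (forall l, G'_rist x (eval_word (wcomm [:: l] B))) ->
  forall A, G'_rist x (eval_word (wcomm A B)).
Proof.
move=> rist_l; elim=> [|l A IH].
  by apply: G'_rist_trivial => u; rewrite /wcomm /= eval_word_cat eval_wordVK.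
by rewrite -cat1s; apply: G'_rist_wcomm_catl.
Qed.

Lemma G'_rist_wcomm x A B : G'_rist x (eval_word (wcomm A B)).
Proof.
apply: G'_rist_wcomm_wordl => -[b i]; apply: G'_rist_wcomm_sym.
by apply: G'_rist_wcomm_wordl => -[c j]; apply: G'_rist_wcomm_letters.
Qed.

Lemma G'_rist_commprod x cs : G'_rist x (eval_word (commprod cs)).
Proof.
elim: cs => [|p cs IH]; first exact: G'_rist_trivial.
apply: G'_rist_ext (G'_rist_comp (G'_rist_wcomm x p.1 p.2) IH) _ => u.
by rewrite commprod_cons eval_word_cat.
Qed.

Lemma G'_rist_of_G' x h : in_G' h -> G'_rist x h.
Proof.
by move=> [cs hE]; apply: G'_rist_ext (G'_rist_commprod x cs) _ => u; rewrite hE.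
Qed.

Lemma G'_rist_prod (hs : 'I_d -> vertex d -> vertex d) (s : seq 'I_d) :
  (forall x, in_G' (hs x)) -> uniq s ->
  exists cs, forall y u,
    eval_word (commprod cs) (y :: u) = y :: (if y \in s then hs y u else u).
Proof.
move=> hsG'; elim: s => [|x s IH] /=; first by exists [::].
move=> /andP [xNs s_uniq]; have [cs2 cs2E] := IH s_uniq.
have [cs1 [cs1x cs1y]] := G'_rist_of_G' x (hsG' x).
exists (cs1 ++ cs2) => y u; rewrite commprod_cat eval_word_cat in_cons.
case: (eqVneq y x) => [->|yNx] /=; first by rewrite cs1x cs2E (negbTE xNs).
by rewrite cs1y // cs2E.
Qed.

End OddDegree.

Theorem theorem4p8 (d : nat) (hd : 3 <= d) (hodd : odd d) :
  spherically_transitive_G d /\ G'_branching d.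
Proof.
split=> [k u v su sv | hs hsG'].
  have [W Wu] := transitive_level hd hodd su sv.
  by exists (eval_word W); split=> //; exists W.
have [cs csE] := G'_rist_prod hd hodd hsG' (enum_uniq 'I_d).
exists (eval_word (commprod cs)); split; first by exists cs.
split=> [x | x v]; rewrite /section csE mem_enum /=; last exact: drop0.
by have [cs' ->] := hsG' x; rewrite eval_word_root.
Qed.
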